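(* Let $g_1,\dots,g_k$ be fully supported elements of $\mathrm{Diff}^2_+(S^1)$, each of which has a fixed point, and let $G$ be the group they generate. If the commutativity graph of $\{g_1,\dots,g_k\}$ is connected, then $G$ is abelian.
   Context: $\mathrm{Diff}^2_+(S^1)$ is the group of orientation-preserving $C^2$ diffeomorphisms of $S^1$. A homeomorphism $f$ is fully supported if the interior of its fixed point set is empty. The commutativity graph of a set $S$ of group elements has one vertex for each $s\in S$ and an edge joining two elements exactly when they commute. *)

From Stdlib Require Import Reals Relations.
From Coquelicot Require Import Coquelicot.
Open Scope R_scope.

(* The circle S^1 = R/Z, represented by the fundamental domain [0,1). *)
Definition S1 : Type := { x : R | 0 <= x < 1 }.

Lemma frac_part_in01 (x : R) : 0 <= frac_part x < 1.
Proof. destruct (base_fp x) as [H1 H2]. split; [apply Rge_le; exact H1 | exact H2]. Qed.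

Definition proj (x : R) : S1 := exist _ (frac_part x) (frac_part_in01 x).

Definition is_lift (f : S1 -> S1) (F : R -> R) : Prop :=
  forall x, proj (F x) = f (proj x).

(* f is an orientation-preserving C^2 diffeomorphism of S^1: it has a lift F
   commuting with integer translation, which is C^2 with F' > 0 everywhere
   (hence a C^2 diffeomorphism of R, by the inverse function theorem). *)
Definition Diff2plus (f : S1 -> S1) : Prop :=
  exists F : R -> R,
    is_lift f F /\
    (forall x, F (x + 1) = F x + 1) /\
    (forall x, ex_derive F x) /\
    (forall x, ex_derive_n F 2 x) /\
    (forall x, continuous (Derive_n F 2) x) /\
    (forall x, 0 < Derive F x).

Definition has_fixed_point (f : S1 -> S1) : Prop := exists p, f p = p.

(* Fix(f) has empty interior in S^1: no nonempty open arc (image of an open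
   interval of R under the covering map) is pointwise fixed. *)
Definition fully_supported (f : S1 -> S1) : Prop :=
  ~ exists a b : R, a < b /\ forall x, a < x < b -> f (proj x) = proj x.

Definition commute_maps (f g : S1 -> S1) : Prop := forall p, f (g p) = g (f p).

Definition comm_edge (k : nat) (g : nat -> S1 -> S1) (i j : nat) : Prop :=
  (i < k)%nat /\ (j < k)%nat /\ commute_maps (g i) (g j).

Definition comm_graph_connected (k : nat) (g : nat -> S1 -> S1) : Prop :=
  forall i j, (i < k)%nat -> (j < k)%nat -> clos_refl_trans nat (comm_edge k g) i j.

Inductive in_gen_group (k : nat) (g : nat -> S1 -> S1) : (S1 -> S1) -> Prop :=
  | gen_id : in_gen_group k g (fun p => p)
  | gen_base : forall i, (i < k)%nat -> in_gen_group k g (g i)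
  | gen_comp : forall h1 h2, in_gen_group k g h1 -> in_gen_group k g h2 ->
               in_gen_group k g (fun p => h1 (h2 p))
  | gen_inv : forall h h', in_gen_group k g h ->
              (forall p, h' (h p) = p) -> (forall p, h (h' p) = p) ->
              in_gen_group k g h'.

Definition gen_group_abelian (k : nat) (g : nat -> S1 -> S1) : Prop :=
  forall h1 h2, in_gen_group k g h1 -> in_gen_group k g h2 -> commute_maps h1 h2.

(* Lift each generator to a C^2 diffeomorphism of R that commutes with
   x |-> x + 1 and has a fixed point; commuting circle maps then have
   commuting lifts.  Commutation propagates along each edge path of the graph
   through the fully supported middle vertex g: if f and h commute with g, then
   by Kopell's lemma f and h fix every fixed point of g, and on each component
   I of R \ Fix(g) the C^1 centralizer of g acts freely.  By Hölder's theorem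
   that centralizer is abelian on I, so f and h commute everywhere. *)

From Stdlib Require Import Reals Relations.
From Coquelicot Require Import Coquelicot.
From Stdlib Require Import Lra Lia Ranalysis5.
From Stdlib Require Import ClassicalEpsilon FunctionalExtensionality ProofIrrelevance Classical.
Open Scope R_scope.

Lemma continuity_pt_delta f x eps : continuity_pt f x -> 0 < eps ->
  exists d, 0 < d /\ forall y, Rabs (y - x) < d -> Rabs (f y - f x) < eps.
Proof.
  intros Hf Heps. destruct (Hf eps Heps) as [d [Hd Hclose]].
  exists d. split; [exact Hd|]. intros y Hy.
  destruct (Req_dec y x) as [->|Hne].
  - rewrite Rminus_diag, Rabs_R0. exact Heps.
  - apply (Hclose y). split; [split; [exact I | auto] | exact Hy].
Qed.

Lemma exp_monotone x y : x <= y -> exp x <= exp y.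
Proof. intros [Hlt| ->]; [left; exact (exp_increasing _ _ Hlt) | right; reflexivity]. Qed.

Lemma strict_increasing_increasing f : strict_increasing f -> increasing f.
Proof. intros Hf x y [Hxy| ->]; [left; auto | right; reflexivity]. Qed.

Lemma strict_increasing_inj f x y : strict_increasing f -> f x = f y -> x = y.
Proof.
  intros Hf E. destruct (Rtotal_order x y) as [H|[H|H]]; auto; apply Hf in H; lra.
Qed.

Lemma pos_deriv_strict_increasing u du : (forall x, derivable_pt_lim u x (du x)) ->
  (forall x, 0 < du x) -> strict_increasing u.
Proof.
  intros Hu Hpos x y Hxy. destruct (MVT_cor2 u du x y Hxy (fun z _ => Hu z)) as [z [E _]].
  assert (0 < du z * (y - x)) by (apply Rmult_lt_0_compat; [apply Hpos | lra]). lra.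
Qed.

Lemma derivable_pt_lim_continuity_pt f x l : derivable_pt_lim f x l -> continuity_pt f x.
Proof. intro H. exact (derivable_continuous_pt f x (exist _ l H)). Qed.

Lemma deriv_commute f g df dg x :
  (forall y, derivable_pt_lim f y (df y)) -> (forall y, derivable_pt_lim g y (dg y)) ->
  (forall y, f (g y) = g (f y)) -> df (g x) * dg x = dg (f x) * df x.
Proof.
  intros Hf Hg Hfg.
  assert (E : comp f g = comp g f) by (apply functional_extensionality; exact Hfg).
  apply (uniqueness_limite (comp f g) x).
  - exact (derivable_pt_lim_comp g f x _ _ (Hg x) (Hf _)).
  - rewrite E. exact (derivable_pt_lim_comp f g x _ _ (Hf x) (Hg _)).
Qed.

Lemma mvt_lower_bound f df k x y : (forall z, derivable_pt_lim f z (df z)) ->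
  (forall z, Rmin x y <= z <= Rmax x y -> k <= df z) ->
  k * (y - x) ^ 2 <= (y - x) * (f y - f x).
Proof.
  intros Hf Hk. destruct (MVT_gen f x y df) as [z [Hz E]].
  - intros z _. apply is_derive_Reals, Hf.
  - intros z _. exact (derivable_pt_lim_continuity_pt _ _ _ (Hf z)).
  - rewrite E. replace ((y - x) * (df z * (y - x))) with (df z * (y - x) ^ 2) by ring.
    apply Rmult_le_compat_r; [apply pow2_ge_0 | exact (Hk z Hz)].
Qed.

Lemma lipschitz_of_bounded_derivative f df M a b : (forall x, derivable_pt_lim f x (df x)) ->
  (forall x, a <= x <= b -> Rabs (df x) <= M) ->
  forall s t, a <= s <= b -> a <= t <= b -> Rabs (f t - f s) <= M * Rabs (t - s).
Proof.
  intros Hf HM s t Hs Ht. destruct (MVT_abs f df s t (fun z _ => Hf z)) as [z [E Hz]].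
  rewrite E. apply Rmult_le_compat_r; [apply Rabs_pos | apply HM].
  unfold Rmin, Rmax in Hz. destruct (Rle_dec s t); lra.
Qed.

Lemma derivative_one_at_accumulating_fixed_points u a l : u a = a -> derivable_pt_lim u a l ->
  (forall eps, 0 < eps -> exists s, s <> a /\ Rabs (s - a) < eps /\ u s = s) -> l = 1.
Proof.
  intros Ha Hu Hacc. apply NNPP. intro Hl.
  destruct (Hu (Rabs (1 - l)) (Rabs_pos_lt _ (Rminus_eq_contra _ _ (not_eq_sym Hl)))) as [d Hd].
  destruct (Hacc d (cond_pos d)) as [s [Hsa [Hsd Hs]]].
  specialize (Hd (s - a) (Rminus_eq_contra _ _ Hsa) Hsd).
  replace (a + (s - a)) with s in Hd by ring. rewrite Hs, Ha in Hd.
  unfold Rdiv in Hd. rewrite Rinv_r in Hd by (apply Rminus_eq_contra; exact Hsa).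
  rewrite Rabs_minus_sym in Hd. lra.
Qed.

Lemma iter_fixed (f : R -> R) n x : f x = x -> Nat.iter n f x = x.
Proof. intro Hx. induction n as [|n IH]; simpl; [|rewrite IH]; auto. Qed.

Lemma iter_commute (f g : R -> R) m n x : (forall y, f (g y) = g (f y)) ->
  Nat.iter m f (Nat.iter n g x) = Nat.iter n g (Nat.iter m f x).
Proof.
  intro Hfg. apply Nat.iter_swap_gen. intro y. symmetry.
  apply Nat.iter_swap_gen. intro z. symmetry. apply Hfg.
Qed.

Lemma iter_strict_increasing f n : strict_increasing f -> strict_increasing (Nat.iter n f).
Proof. intros Hf x y Hxy. induction n as [|n IH]; simpl; auto. Qed.

Lemma iter_increasing f n : increasing f -> increasing (Nat.iter n f).
Proof. intros Hf x y Hxy. induction n as [|n IH]; simpl; auto. Qed.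

Lemma iter_continuity f n : continuity f -> continuity (Nat.iter n f).
Proof.
  intros Hf x. induction n as [|n IH]; simpl.
  - apply continuity_pt_id.
  - exact (continuity_pt_comp (Nat.iter n f) f x IH (Hf _)).
Qed.

Fixpoint iter_deriv (f df : R -> R) (n : nat) (x : R) : R :=
  match n with
  | O => 1
  | S n => df (Nat.iter n f x) * iter_deriv f df n x
  end.

Lemma derivable_pt_lim_iter f df n x : (forall y, derivable_pt_lim f y (df y)) ->
  derivable_pt_lim (Nat.iter n f) x (iter_deriv f df n x).
Proof.
  intro Hf. induction n as [|n IH]; simpl.
  - exact (derivable_pt_lim_id x).
  - exact (derivable_pt_lim_comp (Nat.iter n f) f x _ _ IH (Hf _)).
Qed.

Lemma sequence_crossing (v : nat -> R) y N : v O <= y -> y < v N -> exists m, v m <= y < v (S m).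
Proof.
  intros H0 HN. induction N as [|N IH]; [lra|].
  destruct (Rlt_le_dec y (v N)) as [Hlt|Hle]; [exact (IH Hlt) | exists N; lra].
Qed.

Lemma Un_cv_const c : Un_cv (fun _ => c) c.
Proof.
  intros eps Heps. exists O. intros n _. unfold R_dist. rewrite Rminus_diag, Rabs_R0. exact Heps.
Qed.

Lemma orbit_limit_fixed f x L : continuity_pt f L -> Un_cv (fun n => Nat.iter n f x) L -> f L = L.
Proof.
  intros Hf HL.
  assert (Hshift := CV_shift' _ 1 _ HL). simpl in Hshift.
  assert (E : (fun n => Nat.iter (n + 1) f x) = (fun n => f (Nat.iter n f x)))
    by (apply functional_extensionality; intro n; rewrite Nat.add_1_r; reflexivity).
  rewrite E in Hshift.
  exact (UL_sequence _ _ _ (continuity_seq f _ L Hf HL) Hshift).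
Qed.

Lemma orbit_limit_up f x B : continuity f -> increasing f -> x <= f x ->
  (forall n, Nat.iter n f x <= B) ->
  exists L, f L = L /\ L <= B /\ Un_cv (fun n => Nat.iter n f x) L /\
    forall n, Nat.iter n f x <= L.
Proof.
  intros Hc Hf Hx HB.
  assert (Hgrow : Un_growing (fun n => Nat.iter n f x)).
  { intro n. induction n as [|n IH]; simpl in *; auto. }
  assert (Hub : has_ub (fun n => Nat.iter n f x)) by (exists B; intros y [n ->]; apply HB).
  destruct (growing_cv _ Hgrow Hub) as [L HL].
  exists L. repeat split.
  - exact (orbit_limit_fixed f x L (Hc L) HL).
  - exact (Rle_cv_lim HB HL (Un_cv_const B)).
  - exact HL.
  - exact (growing_ineq _ L Hgrow HL).
Qed.

Lemma orbit_limit_down f x B : continuity f -> increasing f -> f x <= x ->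
  (forall n, B <= Nat.iter n f x) ->
  exists L, f L = L /\ B <= L /\ Un_cv (fun n => Nat.iter n f x) L /\
    forall n, L <= Nat.iter n f x.
Proof.
  intros Hc Hf Hx HB.
  assert (Hdecr : Un_decreasing (fun n => Nat.iter n f x)).
  { intro n. induction n as [|n IH]; simpl in *; auto. }
  assert (Hlb : has_lb (fun n => Nat.iter n f x)).
  { exists (- B). intros y [n ->]. unfold opp_seq. specialize (HB n). lra. }
  destruct (decreasing_cv _ Hdecr Hlb) as [L HL].
  exists L. repeat split.
  - exact (orbit_limit_fixed f x L (Hc L) HL).
  - exact (Rle_cv_lim HB (Un_cv_const B) HL).
  - exact HL.
  - exact (decreasing_ineq _ L Hdecr HL).
Qed.

Lemma fixed_point_of_accumulation f q : continuity_pt f q ->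
  (forall eps, 0 < eps -> exists s, Rabs (s - q) < eps /\ f s = s) -> f q = q.
Proof.
  intros Hc Hacc. apply NNPP. intro Hne.
  set (e := Rabs (f q - q) / 2).
  assert (He : 0 < e) by (unfold e; assert (0 < Rabs (f q - q)) by (apply Rabs_pos_lt; lra); lra).
  destruct (continuity_pt_delta f q e Hc He) as [d [Hd Hclose]].
  destruct (Hacc (Rmin d e) (Rmin_pos _ _ Hd He)) as [s [Hs Hfs]].
  assert (Hsd := Rmin_l d e). assert (Hse := Rmin_r d e).
  assert (Hfsq : Rabs (s - f q) < e) by (rewrite <- Hfs; apply Hclose; lra).
  assert (Rabs (f q - q) <= Rabs (s - f q) + Rabs (s - q)).
  { replace (f q - q) with (- (s - f q) + (s - q)) by ring.
    rewrite <- (Rabs_Ropp (s - f q)). apply Rabs_triang. }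
  unfold e in *. lra.
Qed.

Lemma fixed_point_of_fixed_sequence_limit G v q : continuity_pt G q -> Un_cv v q ->
  (forall n, G (v n) = v n) -> G q = q.
Proof.
  intros Hc Hcv Hfix. apply (fixed_point_of_accumulation G q Hc).
  intros eps Heps. destruct (Hcv eps Heps) as [N HN].
  exists (v N). split; [exact (HN N (le_n N)) | apply Hfix].
Qed.

Lemma no_fixed_point_sign f a b : continuity f -> (forall s, a < s < b -> f s <> s) ->
  (forall s, a < s < b -> f s < s) \/ (forall s, a < s < b -> s < f s).
Proof.
  intros Hc Hfree.
  assert (Hd : continuity (fun x => f x - x))
    by (intro x; apply continuity_pt_minus; [apply Hc | apply continuity_pt_id]).
  assert (Hopp : forall s t, a < s < b -> a < t < b -> f s < s -> t < f t -> False).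
  { intros s t Hs Ht Hfs Hft.
    destruct (Rle_lt_dec s t) as [Hst|Hts].
    - destruct (IVT_cor _ s t Hd Hst) as [z [Hz Ez]]; [cbv beta; nra|].
      apply (Hfree z); lra.
    - destruct (IVT_cor _ t s Hd (Rlt_le _ _ Hts)) as [z [Hz Ez]]; [cbv beta; nra|].
      apply (Hfree z); lra. }
  destruct (classic (exists s, a < s < b /\ f s < s)) as [[s [Hs Hfs]]|Hnone].
  - left. intros t Ht. destruct (Rtotal_order (f t) t) as [H|[H|H]]; auto.
    + exfalso. exact (Hfree t Ht H).
    + exfalso. exact (Hopp s t Hs Ht Hfs H).
  - right. intros t Ht. destruct (Rtotal_order (f t) t) as [H|[H|H]]; auto.
    + exfalso. exact (Hnone (ex_intro _ t (conj Ht H))).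
    + exfalso. exact (Hfree t Ht H).
Qed.

Lemma orbit_gap_up F p q0 : continuity F -> strict_increasing F -> p < F p -> p <= q0 -> F q0 = q0 ->
  exists q, F p < q /\ F q = q /\ (forall s, p < s < q -> s < F s) /\
    Un_cv (fun n => Nat.iter n F p) q.
Proof.
  intros Hc Hinc Hp Hpq0 Hq0. assert (Hmono := strict_increasing_increasing F Hinc).
  assert (Hbound : forall r, p <= r -> F r = r -> forall n, Nat.iter n F p <= r).
  { intros r Hpr Hr n. induction n as [|n IH]; simpl; [exact Hpr | rewrite <- Hr; apply Hmono, IH]. }
  destruct (orbit_limit_up F p q0 Hc Hmono (Rlt_le _ _ Hp) (Hbound q0 Hpq0 Hq0))
    as [q [Hq [_ [Hcv Hbelow]]]].
  assert (HFpq : F p <= q) by exact (Hbelow 1%nat).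
  assert (Hfree : forall r, p <= r < q -> F r <> r).
  { intros r Hr Hfr.
    assert (q <= r) by exact (Rle_cv_lim (Hbound r (proj1 Hr) Hfr) Hcv (Un_cv_const r)). lra. }
  assert (HFpq' : F p < q).
  { destruct HFpq as [Hlt|E]; [exact Hlt|]. exfalso.
    assert (p = q) by (apply (strict_increasing_inj F _ _ Hinc); rewrite Hq; exact E).
    subst q. lra. }
  exists q. repeat split; try assumption.
  destruct (no_fixed_point_sign F p q Hc (fun s Hs => Hfree s ltac:(lra))) as [Hdown|Hup]; [|exact Hup].
  exfalso. assert (F (F p) < F p) by (apply Hdown; lra).
  assert (F p < F (F p)) by (apply Hinc, Hp). lra.
Qed.

Lemma orbit_gap_down F p q0 : continuity F -> strict_increasing F -> F p < p -> q0 <= p -> F q0 = q0 ->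
  exists q, q < F p /\ F q = q /\ (forall s, q < s < p -> F s < s) /\
    Un_cv (fun n => Nat.iter n F p) q.
Proof.
  intros Hc Hinc Hp Hpq0 Hq0. assert (Hmono := strict_increasing_increasing F Hinc).
  assert (Hbound : forall r, r <= p -> F r = r -> forall n, r <= Nat.iter n F p).
  { intros r Hpr Hr n. induction n as [|n IH]; simpl; [exact Hpr | rewrite <- Hr; apply Hmono, IH]. }
  destruct (orbit_limit_down F p q0 Hc Hmono (Rlt_le _ _ Hp) (Hbound q0 Hpq0 Hq0))
    as [q [Hq [_ [Hcv Habove]]]].
  assert (HFpq : q <= F p) by exact (Habove 1%nat).
  assert (Hfree : forall r, q < r <= p -> F r <> r).
  { intros r Hr Hfr.
    assert (r <= q) by exact (Rle_cv_lim (Hbound r (proj2 Hr) Hfr) (Un_cv_const r) Hcv). lra. }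
  assert (HFpq' : q < F p).
  { destruct HFpq as [Hlt|E]; [exact Hlt|]. exfalso.
    assert (p = q) by (apply (strict_increasing_inj F _ _ Hinc); rewrite Hq; symmetry; exact E).
    subst q. lra. }
  exists q. repeat split; try assumption.
  destruct (no_fixed_point_sign F q p Hc (fun s Hs => Hfree s ltac:(lra))) as [Hdown|Hup];
    [exact Hdown|].
  exfalso. assert (F p < F (F p)) by (apply Hup; lra).
  assert (F (F p) < F p) by (apply Hinc, Hp). lra.
Qed.

Definition conj_neg (f : R -> R) (y : R) : R := - f (- y).

Lemma conj_neg_continuity f : continuity f -> continuity (conj_neg f).
Proof.
  intros Hf y. apply continuity_pt_opp.
  apply (continuity_pt_comp (fun z => - z) f y); [apply continuity_pt_opp, continuity_pt_id | apply Hf].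
Qed.

Lemma conj_neg_strict_increasing f : strict_increasing f -> strict_increasing (conj_neg f).
Proof. intros Hf x y Hxy. unfold conj_neg. apply Ropp_lt_contravar, Hf. lra. Qed.

Lemma conj_neg_increasing f : increasing f -> increasing (conj_neg f).
Proof. intros Hf x y Hxy. unfold conj_neg. apply Ropp_le_contravar, Hf. lra. Qed.

Lemma conj_neg_commute f g : (forall x, f (g x) = g (f x)) ->
  forall y, conj_neg f (conj_neg g y) = conj_neg g (conj_neg f y).
Proof. intros Hfg y. unfold conj_neg. rewrite !Ropp_involutive, Hfg. reflexivity. Qed.

Lemma derivable_pt_lim_conj_neg f df y : derivable_pt_lim f (- y) (df (- y)) ->
  derivable_pt_lim (conj_neg f) y (df (- y)).
Proof.
  intro Hf. replace (df (- y)) with (- (df (- y) * - 1)) by ring.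
  apply (derivable_pt_lim_opp (comp f (fun z => - z))).
  apply derivable_pt_lim_comp; [|exact Hf].
  exact (derivable_pt_lim_opp id y 1 (derivable_pt_lim_id y)).
Qed.

Lemma last_fixed_point_below f x : continuity f -> (exists p, p <= x /\ f p = p) -> f x <> x ->
  exists a, a < x /\ f a = a /\ forall t, a < t <= x -> f t <> t.
Proof.
  intros Hc [p [Hpx Hp]] Hx.
  set (E := fun y => f y = y /\ y <= x).
  assert (Hbound : bound E) by (exists x; intros y [_ Hy]; exact Hy).
  destruct (completeness E Hbound (ex_intro _ p (conj Hp Hpx))) as [a [Hub Hlub]].
  assert (Hax : a <= x) by (apply Hlub; intros y [_ Hy]; exact Hy).
  assert (Ha : f a = a).
  { apply (fixed_point_of_accumulation f a (Hc a)). intros eps Heps.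
    apply NNPP. intro Hfar.
    assert (a <= a - eps); [|lra].
    apply Hlub. intros y Hy. assert (y <= a) by (apply Hub; exact Hy).
    destruct (Rle_lt_dec y (a - eps)) as [Hle|Hlt]; [exact Hle|].
    exfalso. apply Hfar. exists y. split; [apply Rabs_def1; lra | apply Hy]. }
  exists a. repeat split; auto.
  - destruct Hax as [Hlt| ->]; [exact Hlt | contradiction].
  - intros t Ht Hft. assert (t <= a) by (apply Hub; split; [exact Hft | lra]). lra.
Qed.

Lemma first_fixed_point_above f x : continuity f -> (exists q, x <= q /\ f q = q) -> f x <> x ->
  exists b, x < b /\ f b = b /\ forall t, x <= t < b -> f t <> t.
Proof.
  intros Hc [q [Hxq Hq]] Hx.
  destruct (last_fixed_point_below (conj_neg f) (- x)) as [a [Ha [Hfa Hfree]]].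
  - exact (conj_neg_continuity f Hc).
  - exists (- q). unfold conj_neg. rewrite Ropp_involutive, Hq. split; lra.
  - unfold conj_neg. rewrite Ropp_involutive. intro E. apply Hx. lra.
  - exists (- a). unfold conj_neg in Hfa. repeat split; [lra | lra |].
    intros t Ht Hft. apply (Hfree (- t)); [lra|].
    unfold conj_neg. rewrite Ropp_involutive, Hft. reflexivity.
Qed.

Lemma fixed_point_free_component f x : continuity f ->
  (exists p, p <= x /\ f p = p) -> (exists q, x <= q /\ f q = q) -> f x <> x ->
  exists a b, a < x < b /\ f a = a /\ f b = b /\ forall t, a < t < b -> f t <> t.
Proof.
  intros Hc Hbelow Habove Hx.
  destruct (last_fixed_point_below f x Hc Hbelow Hx) as [a [Hax [Ha Hfree_a]]].
  destruct (first_fixed_point_above f x Hc Habove Hx) as [b [Hxb [Hb Hfree_b]]].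
  exists a, b. repeat split; auto.
  intros t Ht. destruct (Rle_lt_dec t x); [apply Hfree_a | apply Hfree_b]; lra.
Qed.

(** * Kopell's lemma *)

Definition log_lipschitz_on (c a b : R) (h : R -> R) : Prop :=
  (forall s, a <= s <= b -> 0 < h s) /\
  (forall s t, a <= s <= b -> a <= t <= b -> h t <= exp (c * Rabs (t - s)) * h s).

Section Kopell.
Variables (G dG u du : R -> R) (a b c : R).
Hypotheses (Hc : 0 <= c)
  (HG : forall x, derivable_pt_lim G x (dG x)) (HGinc : strict_increasing G)
  (HdG : log_lipschitz_on c a b dG)
  (HGa : G a = a) (HGlt : forall s, a < s < b -> G s < s)
  (Hu : forall x, derivable_pt_lim u x (du x)) (Hdu : continuity_pt du a)
  (Huinc : increasing u) (Hcomm : forall x, u (G x) = G (u x)) (Hua : u a = a).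

Lemma orbit_bounds s n : a < s < b -> a < Nat.iter n G s <= s.
Proof.
  intro Hs. induction n as [|n IH]; simpl; [lra|].
  assert (G (Nat.iter n G s) < Nat.iter n G s) by (apply HGlt; lra).
  rewrite <- HGa at 1. split; [apply HGinc|]; lra.
Qed.

Lemma orbit_cv s : a < s < b -> Un_cv (fun n => Nat.iter n G s) a.
Proof.
  intro Hs.
  assert (HGc : continuity G) by (intro x; exact (derivable_pt_lim_continuity_pt _ _ _ (HG x))).
  assert (HGs : G s <= s) by (left; apply HGlt; exact Hs).
  destruct (orbit_limit_down G s a HGc (strict_increasing_increasing G HGinc) HGs
              (fun n => Rlt_le _ _ (proj1 (orbit_bounds s n Hs))))
    as [L [HL [HaL [Hcv Hbelow]]]].
  assert (L <= s) by exact (Hbelow O).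
  destruct HaL as [HaL| <-]; [|exact Hcv].
  assert (G L < L) by (apply HGlt; lra). lra.
Qed.

Lemma orbit_eventually_below s eps : a < s < b -> 0 < eps -> exists n, Nat.iter n G s < a + eps.
Proof.
  intros Hs Heps. destruct (orbit_cv s Hs eps Heps) as [N HN].
  exists N. specialize (HN N (le_n N)). unfold R_dist in HN. apply Rabs_def2 in HN. lra.
Qed.

Section FundamentalDomain.
Variable x0 : R.
Hypotheses (Hx0 : a < x0 < b) (Hux0 : u x0 = x0).

Lemma fundamental_domain_in xi : G x0 <= xi <= x0 -> a < xi < b.
Proof. intro Hxi. assert (H := orbit_bounds x0 1 Hx0). simpl in H. lra. Qed.

Lemma fundamental_domain_iter n xi : G x0 <= xi <= x0 ->
  Nat.iter (S n) G x0 <= Nat.iter n G xi <= Nat.iter n G x0.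
Proof.
  intro Hxi. rewrite Nat.iter_succ_r.
  split; apply (iter_increasing G n (strict_increasing_increasing G HGinc)); lra.
Qed.

Lemma fundamental_domain_iter_in n xi : G x0 <= xi <= x0 -> a < Nat.iter n G xi <= x0.
Proof.
  intro Hxi. assert (H := fundamental_domain_iter n xi Hxi).
  assert (H1 := orbit_bounds x0 (S n) Hx0). assert (H2 := orbit_bounds x0 n Hx0). lra.
Qed.

Lemma iter_deriv_G_pos n xi : G x0 <= xi <= x0 -> 0 < iter_deriv G dG n xi.
Proof.
  intro Hxi. induction n as [|n IH]; simpl; [lra|].
  apply Rmult_lt_0_compat; [|exact IH].
  apply (proj1 HdG). assert (H := fundamental_domain_iter_in n xi Hxi). lra.
Qed.

(* Bounded distortion: the images of the fundamental domain under the G^k are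
   disjoint, so their total length is at most x0 - a. *)
Lemma iter_deriv_G_distortion n xi eta : G x0 <= xi <= x0 -> G x0 <= eta <= x0 ->
  iter_deriv G dG n eta <= exp (c * (x0 - Nat.iter n G x0)) * iter_deriv G dG n xi.
Proof.
  intros Hxi Heta. induction n as [|n IH]; simpl.
  - rewrite Rminus_diag, Rmult_0_r, exp_0. lra.
  - set (s := Nat.iter n G xi). set (t := Nat.iter n G eta). set (y := Nat.iter n G x0).
    assert (Hs := fundamental_domain_iter n xi Hxi).
    assert (Ht := fundamental_domain_iter n eta Heta).
    assert (Hs' := fundamental_domain_iter_in n xi Hxi).
    assert (Ht' := fundamental_domain_iter_in n eta Heta).
    simpl in Hs, Ht. fold s t y in Hs, Ht, Hs', Ht'.
    assert (Hts : Rabs (t - s) <= y - G y) by (apply Rabs_le; lra).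
    assert (Hstep : dG t <= exp (c * (y - G y)) * dG s).
    { eapply Rle_trans; [apply (proj2 HdG s t); lra|].
      apply Rmult_le_compat_r; [left; apply (proj1 HdG); lra|].
      apply exp_monotone, Rmult_le_compat_l; assumption. }
    replace (c * (x0 - G y)) with (c * (y - G y) + c * (x0 - y)) by ring. rewrite exp_plus.
    replace (exp (c * (y - G y)) * exp (c * (x0 - y)) * (dG s * iter_deriv G dG n xi))
      with ((exp (c * (y - G y)) * dG s) * (exp (c * (x0 - y)) * iter_deriv G dG n xi)) by ring.
    apply Rmult_le_compat; auto.
    + left. apply (proj1 HdG). lra.
    + left. exact (iter_deriv_G_pos n eta Heta).
Qed.

Lemma deriv_u_at_fixed_end : du a = 1.
Proof.
  apply (derivative_one_at_accumulating_fixed_points u a (du a) Hua (Hu a)).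
  intros eps Heps. destruct (orbit_eventually_below x0 eps Hx0 Heps) as [N HN].
  assert (HN' := orbit_bounds x0 N Hx0).
  exists (Nat.iter N G x0). repeat split.
  - lra.
  - rewrite Rabs_pos_eq; lra.
  - rewrite (Nat.iter_swap_gen _ _ u G G Hcomm), Hux0. reflexivity.
Qed.

Lemma iter_deriv_u_at_fixed_end m :
  continuity_pt (iter_deriv u du m) a /\ iter_deriv u du m a = 1.
Proof.
  induction m as [|m [IHc IH1]]; simpl.
  - split; [apply continuity_pt_const; intros ? ?|]; reflexivity.
  - split.
    + apply (continuity_pt_mult (fun x => du (Nat.iter m u x))); [|exact IHc].
      apply (continuity_pt_comp (Nat.iter m u) du).
      * apply iter_continuity. intro x. exact (derivable_pt_lim_continuity_pt _ _ _ (Hu x)).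
      * rewrite iter_fixed; assumption.
    + rewrite iter_fixed, deriv_u_at_fixed_end, IH1 by exact Hua. ring.
Qed.

Lemma iter_u_fundamental_domain m y : G x0 <= y <= x0 -> G x0 <= Nat.iter m u y <= x0.
Proof.
  intro Hy. induction m as [|m IH]; simpl; [exact Hy|].
  rewrite <- Hux0 at 1 2. rewrite <- Hcomm. split; apply Huinc; lra.
Qed.

(* Differentiating u^m o G^N = G^N o u^m at xi, with G^N xi close to a where
   (u^m)' is close to 1, and using bounded distortion of G^N. *)
Lemma iter_deriv_u_lower_bound m xi : G x0 <= xi <= x0 ->
  / (2 * exp (c * (x0 - a))) <= iter_deriv u du m xi.
Proof.
  intro Hxi. set (kappa := exp (c * (x0 - a))).
  destruct (iter_deriv_u_at_fixed_end m) as [Hcont H1].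
  destruct (continuity_pt_delta _ _ (/ 2) Hcont ltac:(lra)) as [d [Hd Hclose]].
  destruct (orbit_eventually_below xi d (fundamental_domain_in xi Hxi) Hd) as [N HN].
  assert (Hnear : / 2 < iter_deriv u du m (Nat.iter N G xi)).
  { assert (HxiN := fundamental_domain_iter_in N xi Hxi).
    assert (H := Hclose (Nat.iter N G xi) ltac:(rewrite Rabs_pos_eq; lra)).
    rewrite H1 in H. apply Rabs_def2 in H. lra. }
  assert (Hchain := deriv_commute (Nat.iter m u) (Nat.iter N G)
    (iter_deriv u du m) (iter_deriv G dG N) xi
    (fun y => derivable_pt_lim_iter u du m y Hu) (fun y => derivable_pt_lim_iter G dG N y HG)
    (fun y => iter_commute u G m N y Hcomm)).
  assert (Hum := iter_u_fundamental_domain m xi Hxi).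
  assert (Hdist := iter_deriv_G_distortion N xi (Nat.iter m u xi) Hxi Hum).
  assert (Hkappa : exp (c * (x0 - Nat.iter N G x0)) <= kappa).
  { apply exp_monotone, Rmult_le_compat_l; [exact Hc|]. assert (H := orbit_bounds x0 N Hx0). lra. }
  assert (HDxi := iter_deriv_G_pos N xi Hxi). assert (HDum := iter_deriv_G_pos N _ Hum).
  assert (Hk : 0 < kappa) by apply exp_pos.
  apply (Rmult_le_reg_l (iter_deriv G dG N (Nat.iter m u xi))); [exact HDum|].
  rewrite <- Hchain.
  apply Rle_trans with (iter_deriv G dG N xi * / 2).
  - apply Rle_trans with (kappa * iter_deriv G dG N xi * / (2 * kappa)).
    + apply Rmult_le_compat_r; [left; apply Rinv_0_lt_compat; lra|].
      eapply Rle_trans; [exact Hdist|]. apply Rmult_le_compat_r; lra.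
    + right. field. lra.
  - rewrite Rmult_comm. apply Rmult_le_compat_r; lra.
Qed.

(* If u y <> y, every application of u moves the orbit of y by at least a
   fixed amount in the same direction, which the fundamental domain cannot
   accommodate. *)
Lemma kopell_fundamental_domain y : G x0 <= y <= x0 -> u y = y.
Proof.
  intro Hy. set (k := / (2 * exp (c * (x0 - a)))). set (d := u y - y).
  assert (Hk : 0 < k) by (apply Rinv_0_lt_compat; assert (H := exp_pos (c * (x0 - a))); lra).
  assert (Huy := iter_u_fundamental_domain 1 y Hy). simpl in Huy.
  assert (Hstep : forall m, k * d ^ 2 <= d * (Nat.iter (S m) u y - Nat.iter m u y)).
  { intro m. rewrite Nat.iter_succ_r.
    apply (mvt_lower_bound (Nat.iter m u) (iter_deriv u du m)).
    - intro z. apply derivable_pt_lim_iter, Hu.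
    - intros z Hz. apply iter_deriv_u_lower_bound.
      unfold Rmin, Rmax in Hz.
      destruct (Rle_dec y (u y)); lra. }
  assert (Hsum : forall N, INR N * (k * d ^ 2) <= d * (Nat.iter N u y - y)).
  { induction N as [|N IH]; [simpl; lra|].
    rewrite S_INR. specialize (Hstep N). simpl in Hstep |- *. lra. }
  assert (Hbound : forall N, d * (Nat.iter N u y - y) <= Rabs d * (x0 - G x0)).
  { intro N. assert (HN := iter_u_fundamental_domain N y Hy).
    eapply Rle_trans; [apply Rle_abs|]. rewrite Rabs_mult.
    apply Rmult_le_compat_l; [apply Rabs_pos | apply Rabs_le; lra]. }
  apply NNPP. intro Hne. fold d in Hne.
  assert (Hd : 0 < Rabs d) by (apply Rabs_pos_lt; unfold d; lra).
  destruct (INR_unbounded ((x0 - G x0) / (k * Rabs d))) as [N HN].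
  assert (Hkd : 0 < k * Rabs d) by (apply Rmult_lt_0_compat; assumption).
  assert (Hsq : d ^ 2 = Rabs d * Rabs d) by (rewrite <- Rabs_mult, Rabs_pos_eq; nra).
  assert (H := Rle_trans _ _ _ (Hsum N) (Hbound N)). rewrite Hsq in H.
  assert (HNd : INR N * (k * Rabs d) <= x0 - G x0).
  { apply (Rmult_le_reg_r (Rabs d)); [exact Hd | lra]. }
  assert (E : (x0 - G x0) / (k * Rabs d) * (k * Rabs d) = x0 - G x0) by (field; lra).
  apply (Rmult_lt_compat_r (k * Rabs d)) in HN; [lra | exact Hkd].
Qed.

End FundamentalDomain.

Theorem kopell t0 : a < t0 < b -> u t0 = t0 -> forall t, a < t < b -> u t = t.
Proof.
  intros Ht0 Hut0 t Ht.
  destruct (orbit_eventually_below t (t0 - a) Ht ltac:(lra)) as [N HN].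
  set (s := Nat.iter N G t). assert (Hs := orbit_bounds t N Ht). fold s in HN, Hs.
  destruct (orbit_eventually_below t0 (s - a) Ht0 ltac:(lra)) as [M HM].
  destruct (sequence_crossing (fun m => - Nat.iter m G t0) (- s) M) as [m Hm]; [simpl; lra | lra |].
  simpl in Hm.
  assert (Hm0 := orbit_bounds t0 m Ht0).
  assert (Hus : u s = s).
  { apply (kopell_fundamental_domain (Nat.iter m G t0)); [lra | |lra].
    rewrite (Nat.iter_swap_gen _ _ u G G Hcomm), Hut0. reflexivity. }
  unfold s in Hus. rewrite (Nat.iter_swap_gen _ _ u G G Hcomm) in Hus.
  exact (strict_increasing_inj _ _ _ (iter_strict_increasing G N HGinc) Hus).
Qed.

End Kopell.

Lemma log_lipschitz_on_neg c a b h : log_lipschitz_on c a b h ->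
  log_lipschitz_on c (- b) (- a) (fun z => h (- z)).
Proof.
  intros [Hpos Hlip]. split.
  - intros s Hs. apply Hpos. lra.
  - intros s t Hs Ht. replace (t - s) with (- (- t - - s)) by ring. rewrite Rabs_Ropp.
    apply Hlip; lra.
Qed.

Theorem kopell_right (G dG u du : R -> R) (a b c t0 : R) : 0 <= c ->
  (forall x, derivable_pt_lim G x (dG x)) -> strict_increasing G -> log_lipschitz_on c a b dG ->
  G b = b -> (forall s, a < s < b -> s < G s) ->
  (forall x, derivable_pt_lim u x (du x)) -> continuity_pt du b -> increasing u ->
  (forall x, u (G x) = G (u x)) -> u b = b ->
  a < t0 < b -> u t0 = t0 -> forall t, a < t < b -> u t = t.
Proof.
  intros Hc HG HGinc HdG HGb HGgt Hu Hdu Huinc Hcomm Hub Ht0 Hut0 t Ht.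
  assert (E : conj_neg u (- t) = - t).
  { apply (kopell (conj_neg G) (fun z => dG (- z)) (conj_neg u) (fun z => du (- z))
             (- b) (- a) c) with (t0 := - t0); try lra.
    - intro x. apply derivable_pt_lim_conj_neg, HG.
    - apply conj_neg_strict_increasing, HGinc.
    - apply log_lipschitz_on_neg, HdG.
    - unfold conj_neg. rewrite Ropp_involutive, HGb. reflexivity.
    - intros s Hs. unfold conj_neg. assert (- s < G (- s)) by (apply HGgt; lra). lra.
    - intro x. apply derivable_pt_lim_conj_neg, Hu.
    - apply (continuity_pt_comp (fun z => - z) du); [apply continuity_pt_opp, continuity_pt_id|].
      rewrite Ropp_involutive. exact Hdu.
    - apply conj_neg_increasing, Huinc.
    - apply conj_neg_commute, Hcomm.
    - unfold conj_neg. rewrite Ropp_involutive, Hub. reflexivity.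
    - unfold conj_neg. rewrite Ropp_involutive, Hut0. reflexivity. }
  unfold conj_neg in E. rewrite Ropp_involutive in E. lra.
Qed.

(** * Hölder's theorem *)

(* Arbitrary when y is not in the range of u. *)
Definition inverse_fun (u : R -> R) (y : R) : R := epsilon (inhabits 0) (fun x => u x = y).

Lemma inverse_fun_r u y : (exists x, u x = y) -> u (inverse_fun u y) = y.
Proof. exact (epsilon_spec (inhabits 0) (fun x => u x = y)). Qed.

Lemma inverse_fun_l u x : strict_increasing u -> inverse_fun u (u x) = x.
Proof. intro Hu. apply (strict_increasing_inj u _ _ Hu), inverse_fun_r. exists x. reflexivity. Qed.

Section Holder.
Variables (P : (R -> R) -> Prop) (a b : R).
Hypotheses (Hab : a < b)
  (Pid : P (fun x => x))
  (Pcomp : forall u v, P u -> P v -> P (fun x => u (v x)))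
  (Pinv : forall u, P u -> P (inverse_fun u))
  (Pinc : forall u, P u -> strict_increasing u)
  (Psurj : forall u, P u -> forall y, exists x, u x = y)
  (Pcont : forall u, P u -> continuity u)
  (Pfix : forall u, P u -> u a = a /\ u b = b)
  (Pfree : forall u t0, P u -> a < t0 < b -> u t0 = t0 -> forall t, a < t < b -> u t = t).

Definition agree (u v : R -> R) : Prop := forall t, a < t < b -> u t = v t.
Definition below (u v : R -> R) : Prop := forall t, a < t < b -> u t < v t.
Definition below_eq (u v : R -> R) : Prop := forall t, a < t < b -> u t <= v t.
Definition commute_on (u v : R -> R) : Prop := forall t, a < t < b -> u (v t) = v (u t).

Let mid := (a + b) / 2.

Lemma mid_in : a < mid < b.
Proof. unfold mid. lra. Qed.

Lemma P_inverse_r u y : P u -> u (inverse_fun u y) = y.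
Proof. intro Hu. apply inverse_fun_r, Psurj, Hu. Qed.

Lemma P_inverse_l u x : P u -> inverse_fun u (u x) = x.
Proof. intro Hu. apply inverse_fun_l, Pinc, Hu. Qed.

Lemma P_inverse_lt u y z : P u -> (inverse_fun u y < z <-> y < u z).
Proof.
  intro Hu. rewrite <- (P_inverse_r u y Hu) at 2.
  split; [apply Pinc, Hu|].
  intro H. destruct (Rlt_le_dec (inverse_fun u y) z) as [Hlt|Hle]; [exact Hlt|].
  exfalso. apply (strict_increasing_increasing u (Pinc u Hu)) in Hle. lra.
Qed.

Lemma P_inverse_gt u y z : P u -> (z < inverse_fun u y <-> u z < y).
Proof.
  intro Hu. rewrite <- (P_inverse_r u y Hu) at 2.
  split; [apply Pinc, Hu|].
  intro H. destruct (Rlt_le_dec z (inverse_fun u y)) as [Hlt|Hle]; [exact Hlt|].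
  exfalso. apply (strict_increasing_increasing u (Pinc u Hu)) in Hle. lra.
Qed.

Lemma P_maps_interval u t : P u -> a < t < b -> a < u t < b.
Proof.
  intros Hu Ht. destruct (Pfix u Hu) as [Ha Hb].
  rewrite <- Ha, <- Hb. split; apply Pinc; tauto.
Qed.

Lemma P_iter e n : P e -> P (Nat.iter n e).
Proof. intro He. induction n as [|n IH]; [exact Pid | exact (Pcomp e _ He IH)]. Qed.

Lemma agree_of_point u v s : P u -> P v -> a < s < b -> u s = v s -> agree u v.
Proof.
  intros Hu Hv Hs E t Ht.
  set (w := fun x => inverse_fun v (u x)).
  assert (Hw : P w) by exact (Pcomp _ _ (Pinv v Hv) Hu).
  assert (Hws : w s = s) by (unfold w; rewrite E; apply P_inverse_l, Hv).
  assert (Hwt := Pfree w s Hw Hs Hws t Ht). unfold w in Hwt.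
  rewrite <- Hwt at 2. symmetry. apply P_inverse_r, Hv.
Qed.

Lemma below_of_point u v s : P u -> P v -> a < s < b -> u s < v s -> below u v.
Proof.
  intros Hu Hv Hs Hlt t Ht.
  set (w := fun x => inverse_fun v (u x)).
  assert (Hw : P w) by exact (Pcomp _ _ (Pinv v Hv) Hu).
  assert (Hwfree : forall x, a < x < b -> w x <> x).
  { intros x Hx Hwx. assert (Hws := Pfree w x Hw Hx Hwx s Hs).
    unfold w in Hws. apply (P_inverse_lt v (u s) s Hv) in Hlt. lra. }
  destruct (no_fixed_point_sign w a b (Pcont w Hw) Hwfree) as [Hdown|Hup].
  - apply (P_inverse_lt v (u t) t Hv), Hdown, Ht.
  - exfalso. specialize (Hup s Hs). unfold w in Hup.
    apply (P_inverse_lt v (u s) s Hv) in Hlt. lra.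
Qed.

Lemma below_eq_of_point u v s : P u -> P v -> a < s < b -> u s <= v s -> below_eq u v.
Proof.
  intros Hu Hv Hs [Hlt|E] t Ht.
  - left. exact (below_of_point u v s Hu Hv Hs Hlt t Ht).
  - right. exact (agree_of_point u v s Hu Hv Hs E t Ht).
Qed.

Lemma trichotomy u v : P u -> P v -> agree u v \/ below u v \/ below v u.
Proof.
  intros Hu Hv. destruct (Rtotal_order (u mid) (v mid)) as [H|[H|H]].
  - right; left. exact (below_of_point u v mid Hu Hv mid_in H).
  - left. exact (agree_of_point u v mid Hu Hv mid_in H).
  - right; right. exact (below_of_point v u mid Hv Hu mid_in H).
Qed.

Lemma archimedean e u : P e -> below (fun x => x) e -> P u -> exists N, below u (Nat.iter N e).
Proof.
  intros He Hpos Hu.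
  destruct (classic (exists N, u mid < Nat.iter N e mid)) as [[N HN]|Hnone].
  - exists N. exact (below_of_point u _ mid Hu (P_iter e N He) mid_in HN).
  - exfalso.
    assert (Hbound : forall n, Nat.iter n e mid <= u mid).
    { intro n. apply Rnot_lt_le. intro H. exact (Hnone (ex_intro _ n H)). }
    destruct (orbit_limit_up e mid (u mid) (Pcont e He) (strict_increasing_increasing e (Pinc e He))
                (Rlt_le _ _ (Hpos mid mid_in)) Hbound) as [L [HL [HLu [_ Hbelow]]]].
    assert (mid <= L) by exact (Hbelow O).
    assert (Humid := P_maps_interval u mid Hu mid_in).
    assert (Hmid := mid_in). assert (HeL := Hpos L ltac:(lra)). lra.
Qed.

Lemma floor e g : P e -> below (fun x => x) e -> P g -> mid <= g mid ->
  exists m, below_eq (Nat.iter m e) g /\ below g (Nat.iter (S m) e).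
Proof.
  intros He Hpos Hg Hmid.
  destruct (archimedean e g He Hpos Hg) as [N HN].
  destruct (sequence_crossing (fun n => Nat.iter n e mid) (g mid) N Hmid (HN mid mid_in))
    as [m [Hm1 Hm2]].
  exists m. split.
  - exact (below_eq_of_point _ g mid (P_iter e m He) Hg mid_in Hm1).
  - exact (below_of_point g _ mid Hg (P_iter e (S m) He) mid_in Hm2).
Qed.

Section StrictCommutator.
Variables f h : R -> R.
Hypotheses (Pf : P f) (Ph : P h) (Hf : below (fun x => x) f) (Hh : below (fun x => x) h)
  (Hlt : below (fun x => h (f x)) (fun x => f (h x))).

(* c = (f h) (h f)^-1 is positive; it turns out to be the least positive
   element of P, which forces f and h to be powers of c. *)
Let c := fun x => f (h (inverse_fun (fun y => h (f y)) x)).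

Lemma commutator_in_P : P c.
Proof. exact (Pcomp _ _ Pf (Pcomp _ _ Ph (Pinv _ (Pcomp _ _ Ph Pf)))). Qed.

Lemma commutator_hf s : c (h (f s)) = f (h s).
Proof. unfold c. rewrite (P_inverse_l (fun y => h (f y))); [reflexivity | exact (Pcomp _ _ Ph Pf)]. Qed.

Lemma commutator_positive : below (fun x => x) c.
Proof.
  intros t Ht. set (s := inverse_fun (fun y => h (f y)) t).
  assert (Hhf : P (fun y => h (f y))) by exact (Pcomp _ _ Ph Pf).
  assert (Hs : a < s < b) by (apply P_maps_interval; [apply Pinv|]; assumption).
  assert (Et : h (f s) = t) by exact (P_inverse_r _ t Hhf).
  unfold c. fold s. rewrite <- Et at 1. exact (Hlt s Hs).
Qed.

(* Measuring f and h in units of e gives e^(n+m) <= h f < f h < e^(n+m+2),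
   whereas f h = c (h f) >= e^2 (h f). *)
Lemma no_positive_square_below_commutator e : P e -> below (fun x => x) e ->
  ~ below_eq (fun x => e (e x)) c.
Proof.
  intros He Hpos Hee.
  assert (Hmid := mid_in).
  destruct (floor e f He Hpos Pf (Rlt_le _ _ (Hf mid mid_in))) as [m [Hm1 Hm2]].
  destruct (floor e h He Hpos Ph (Rlt_le _ _ (Hh mid mid_in))) as [n [Hn1 Hn2]].
  assert (Hhmid := P_maps_interval h mid Ph Hmid). assert (Hfmid := P_maps_interval f mid Pf Hmid).
  assert (Hupper : f (h mid) < Nat.iter (S (S (n + m))) e mid).
  { replace (S (S (n + m))) with (S m + S n)%nat by lia. rewrite Nat.iter_add.
    eapply Rlt_trans; [exact (Hm2 _ Hhmid)|].
    apply (iter_strict_increasing e (S m) (Pinc e He)), Hn2, Hmid. }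
  assert (Hlower : Nat.iter (n + m) e mid <= h (f mid)).
  { rewrite Nat.iter_add. eapply Rle_trans; [|exact (Hn1 _ Hfmid)].
    apply (iter_increasing e n (strict_increasing_increasing e (Pinc e He))), Hm1, Hmid. }
  assert (Hsq := Hee (h (f mid)) (P_maps_interval h _ Ph Hfmid)).
  rewrite commutator_hf in Hsq.
  assert (He2 : increasing (fun x => e (e x))).
  { intros x y Hxy. apply (strict_increasing_increasing e (Pinc e He)).
    apply (strict_increasing_increasing e (Pinc e He)). exact Hxy. }
  apply He2 in Hlower. simpl in Hupper, Hlower. lra.
Qed.

Lemma commutator_least e : P e -> below (fun x => x) e -> below_eq c e.
Proof.
  intros He Hpos. destruct (trichotomy c e commutator_in_P He) as [E|[Hce|Hec]].
  - intros t Ht. right. exact (E t Ht).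
  - intros t Ht. left. exact (Hce t Ht).
  - exfalso.
    destruct (trichotomy (fun x => e (e x)) c (Pcomp _ _ He He) commutator_in_P) as [E|[Hlt2|Hgt2]].
    + apply (no_positive_square_below_commutator e He Hpos). intros t Ht. right. exact (E t Ht).
    + apply (no_positive_square_below_commutator e He Hpos). intros t Ht. left. exact (Hlt2 t Ht).
    + (* then e' = c e^-1 is positive with e' e' <= e' e = c *)
      set (e' := fun x => c (inverse_fun e x)).
      assert (Pe' : P e') by exact (Pcomp _ _ commutator_in_P (Pinv _ He)).
      assert (He'e : forall t, a < t < b -> e' t < e t).
      { intros t Ht. unfold e'. rewrite <- (P_inverse_r e t He) at 2.
        apply Hgt2, P_maps_interval; [apply Pinv|]; assumption. }
      apply (no_positive_square_below_commutator e' Pe').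
      * intros t Ht. unfold e'. rewrite <- (P_inverse_r e t He) at 1.
        apply Hec, P_maps_interval; [apply Pinv|]; assumption.
      * intros t Ht. left.
        replace (c t) with (e' (e t)) by (unfold e'; rewrite P_inverse_l by exact He; reflexivity).
        apply (Pinc e' Pe'), He'e, Ht.
Qed.

Lemma positive_is_commutator_power g : P g -> below (fun x => x) g ->
  exists m, agree g (Nat.iter m c).
Proof.
  intros Hg Hpos.
  destruct (floor c g commutator_in_P commutator_positive Hg (Rlt_le _ _ (Hpos mid mid_in)))
    as [m [Hm1 Hm2]].
  assert (Pcm := P_iter c m commutator_in_P).
  set (w := fun x => inverse_fun (Nat.iter m c) (g x)).
  assert (Pw : P w) by exact (Pcomp _ _ (Pinv _ Pcm) Hg).
  assert (Hmid := mid_in).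
  exists m. destruct (trichotomy w (fun x => x) Pw Pid) as [E|[Hlt'|Hgt']].
  - intros t Ht. rewrite <- (P_inverse_r _ (g t) Pcm). fold (w t). rewrite (E t Ht). reflexivity.
  - exfalso. specialize (Hlt' mid Hmid). unfold w in Hlt'.
    apply (P_inverse_lt _ _ _ Pcm) in Hlt'. specialize (Hm1 mid Hmid). simpl in Hlt'. lra.
  - exfalso. assert (Hcw := commutator_least w Pw Hgt' mid Hmid).
    assert (Hwc : w mid < c mid).
    { unfold w. apply (P_inverse_lt _ _ _ Pcm). rewrite <- Nat.iter_succ_r. exact (Hm2 mid Hmid). }
    lra.
Qed.

Lemma strict_commutator_absurd : False.
Proof.
  destruct (positive_is_commutator_power f Pf Hf) as [m Em].
  destruct (positive_is_commutator_power h Ph Hh) as [n En].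
  assert (Hmid := mid_in). specialize (Hlt mid Hmid). cbv beta in Hlt.
  rewrite (Em _ (P_maps_interval h mid Ph Hmid)), (En _ (P_maps_interval f mid Pf Hmid)),
    (En mid Hmid), (Em mid Hmid), <- !Nat.iter_add, Nat.add_comm in Hlt.
  lra.
Qed.

End StrictCommutator.

Lemma positive_commute f h : P f -> P h -> below (fun x => x) f -> below (fun x => x) h ->
  commute_on f h.
Proof.
  intros Pf Ph Hf Hh.
  destruct (trichotomy (fun x => f (h x)) (fun x => h (f x)) (Pcomp _ _ Pf Ph) (Pcomp _ _ Ph Pf))
    as [E|[Hlt|Hgt]].
  - exact E.
  - exfalso. exact (strict_commutator_absurd h f Ph Pf Hh Hf Hlt).
  - exfalso. exact (strict_commutator_absurd f h Pf Ph Hf Hh Hgt).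
Qed.

Lemma commute_on_sym f h : commute_on f h -> commute_on h f.
Proof. intros H t Ht. symmetry. exact (H t Ht). Qed.

Lemma commute_on_of_positive f h : P f -> P h ->
  (forall f', P f' -> below (fun x => x) f' -> commute_on f' h) -> commute_on f h.
Proof.
  intros Pf Ph Hpos. destruct (trichotomy f (fun x => x) Pf Pid) as [E|[Hlt|Hgt]].
  - intros t Ht. rewrite (E t Ht). apply E, P_maps_interval; assumption.
  - assert (Hinv : below (fun x => x) (inverse_fun f)).
    { intros t Ht. apply (P_inverse_gt f t t Pf), Hlt, Ht. }
    intros t Ht. assert (Hft := P_maps_interval f t Pf Ht).
    assert (E := Hpos _ (Pinv f Pf) Hinv (f t) Hft).
    rewrite P_inverse_l in E by exact Pf.
    rewrite <- E. apply P_inverse_r, Pf.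
  - exact (Hpos f Pf Hgt).
Qed.

Theorem holder f h : P f -> P h -> commute_on f h.
Proof.
  intros Pf Ph. apply commute_on_of_positive; [assumption .. |].
  intros f' Pf' Hf'. apply commute_on_sym, commute_on_of_positive; [assumption .. |].
  intros h' Ph' Hh'. apply commute_on_sym, positive_commute; assumption.
Qed.

End Holder.

Definition C1_diffeo (u du : R -> R) : Prop :=
  (forall x, derivable_pt_lim u x (du x)) /\ continuity du /\
  (forall x, 0 < du x) /\ (forall y, exists x, u x = y).

Lemma C1_diffeo_id : C1_diffeo (fun x => x) (fun _ => 1).
Proof.
  repeat split.
  - exact derivable_pt_lim_id.
  - intro x. apply continuity_pt_const. intros ? ?. reflexivity.
  - intros _. lra.
  - intro y. exists y. reflexivity.
Qed.

Lemma C1_diffeo_comp u du v dv : C1_diffeo u du -> C1_diffeo v dv ->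
  C1_diffeo (fun x => u (v x)) (fun x => du (v x) * dv x).
Proof.
  intros [Hu [Hdu [Hupos Husurj]]] [Hv [Hdv [Hvpos Hvsurj]]]. repeat split.
  - intro x. exact (derivable_pt_lim_comp v u x _ _ (Hv x) (Hu _)).
  - intro x. apply (continuity_pt_mult (fun x => du (v x))); [|apply Hdv].
    apply (continuity_pt_comp v du); [exact (derivable_pt_lim_continuity_pt _ _ _ (Hv x)) | apply Hdu].
  - intro x. apply Rmult_lt_0_compat; [apply Hupos | apply Hvpos].
  - intro y. destruct (Husurj y) as [z <-]. destruct (Hvsurj z) as [x <-]. exists x. reflexivity.
Qed.

Lemma inverse_fun_strict_increasing u : strict_increasing u -> (forall y, exists x, u x = y) ->
  strict_increasing (inverse_fun u).
Proof.
  intros Hu Hsurj y1 y2 Hy.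
  destruct (Rlt_le_dec (inverse_fun u y1) (inverse_fun u y2)) as [H|H]; [exact H|].
  apply (strict_increasing_increasing u Hu) in H. rewrite !inverse_fun_r in H by apply Hsurj. lra.
Qed.

Lemma C1_diffeo_inverse u du : C1_diffeo u du ->
  C1_diffeo (inverse_fun u) (fun y => / du (inverse_fun u y)).
Proof.
  intros [Hu [Hdu [Hpos Hsurj]]].
  assert (Hinc := pos_deriv_strict_increasing u du Hu Hpos).
  assert (Hr : forall y, u (inverse_fun u y) = y) by (intro y; apply inverse_fun_r, Hsurj).
  assert (Hl : forall x, inverse_fun u (u x) = x) by (intro x; apply inverse_fun_l, Hinc).
  assert (Hvinc := strict_increasing_increasing _ (inverse_fun_strict_increasing u Hinc Hsurj)).
  assert (Hvc : continuity (inverse_fun u)).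
  { intro y. set (x := inverse_fun u y).
    apply (continuity_pt_recip_interv u (inverse_fun u) (x - 1) (x + 1)); [lra | | | | |].
    - intros p q _ Hpq _. apply Hinc, Hpq.
    - intros z _ _. apply Hr.
    - intros z Hz1 Hz2. rewrite <- (Hl (x - 1)), <- (Hl (x + 1)). split; apply Hvinc; assumption.
    - intros z _. exact (derivable_pt_lim_continuity_pt _ _ _ (Hu z)).
    - unfold x. rewrite <- (Hr y) at 2 3. split; apply Hinc; lra. }
  repeat split.
  - intro y.
    assert (Prf : forall z, inverse_fun u (y - 1) <= z <= inverse_fun u (y + 1) -> derivable_pt u z)
      by (intros z _; exact (exist _ (du z) (Hu z))).
    assert (Hbetween : inverse_fun u (y - 1) <= inverse_fun u y <= inverse_fun u (y + 1))
      by (split; apply Hvinc; lra).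
    assert (E : derive_pt u (inverse_fun u y) (Prf _ Hbetween) = du (inverse_fun u y))
      by (apply derive_pt_eq_0, Hu).
    assert (Hne : du (inverse_fun u y) <> 0) by (apply Rgt_not_eq, Hpos).
    replace (/ du (inverse_fun u y)) with (1 / derive_pt u (inverse_fun u y) (Prf _ Hbetween))
      by (rewrite E; field; exact Hne).
    apply (derivable_pt_lim_recip_interv u (inverse_fun u) (y - 1) (y + 1) y Prf (Hvc y));
      [lra | lra | |].
    + intros z _. apply Hr.
    + rewrite E. exact Hne.
  - intro y. apply continuity_pt_inv; [|apply Rgt_not_eq, Hpos].
    apply (continuity_pt_comp (inverse_fun u) du); [apply Hvc | apply Hdu].
  - intro y. apply Rinv_0_lt_compat, Hpos.
  - intro x. exists (u x). apply Hl.
Qed.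

Definition C2_pos_deriv (F : R -> R) : Prop :=
  (forall x, ex_derive F x) /\ (forall x, ex_derive (Derive F) x) /\
  (forall x, continuous (Derive (Derive F)) x) /\ (forall x, 0 < Derive F x).

Section C2.
Variable F : R -> R.
Hypothesis HF : C2_pos_deriv F.

Lemma C2_derivable x : derivable_pt_lim F x (Derive F x).
Proof. apply is_derive_Reals, Derive_correct, HF. Qed.

Lemma C2_derivable_deriv x : derivable_pt_lim (Derive F) x (Derive (Derive F) x).
Proof. apply is_derive_Reals, Derive_correct, HF. Qed.

Lemma C2_continuity : continuity F.
Proof. intro x. exact (derivable_pt_lim_continuity_pt _ _ _ (C2_derivable x)). Qed.

Lemma C2_deriv_continuity : continuity (Derive F).
Proof. intro x. exact (derivable_pt_lim_continuity_pt _ _ _ (C2_derivable_deriv x)). Qed.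

Lemma C2_strict_increasing : strict_increasing F.
Proof. exact (pos_deriv_strict_increasing F (Derive F) C2_derivable (proj2 (proj2 (proj2 HF)))). Qed.

(* ln F' is Lipschitz on compacts, with constant max |F''| / min F'. *)
Lemma C2_log_lipschitz a b : a <= b -> exists c, 0 <= c /\ log_lipschitz_on c a b (Derive F).
Proof.
  intro Hab. destruct HF as [_ [_ [HF2 Hpos]]].
  destruct (continuity_ab_min (Derive F) a b Hab (fun x _ => C2_deriv_continuity x)) as [xm [Hmin _]].
  destruct (continuity_ab_maj (fun x => Rabs (Derive (Derive F) x)) a b Hab) as [xM [Hmax _]].
  { intros x _. apply (continuity_pt_comp (Derive (Derive F)) Rabs); [|apply Rcontinuity_abs].
    apply continuity_pt_filterlim, HF2. }
  set (mu := Derive F xm). set (M := Rabs (Derive (Derive F) xM)).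
  assert (Hmu : 0 < mu) by apply Hpos.
  assert (HM : 0 <= M) by apply Rabs_pos.
  exists (M / mu). split; [apply Rmult_le_pos; [exact HM | left; apply Rinv_0_lt_compat, Hmu]|].
  split; [intros s _; apply Hpos|].
  intros s t Hs Ht.
  assert (Hlip := lipschitz_of_bounded_derivative _ _ M a b C2_derivable_deriv Hmax s t Hs Ht).
  assert (Hmus : mu <= Derive F s) by (apply Hmin, Hs).
  assert (Hexp := exp_ineq1_le (M / mu * Rabs (t - s))).
  assert (Hd : 0 <= Rabs (t - s)) by apply Rabs_pos.
  assert (H1 : M * Rabs (t - s) <= M / mu * Rabs (t - s) * Derive F s).
  { replace (M / mu * Rabs (t - s) * Derive F s) with (M * Rabs (t - s) * (Derive F s / mu))
      by (field; lra).
    rewrite <- (Rmult_1_r (M * Rabs (t - s))) at 1.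
    apply Rmult_le_compat_l; [apply Rmult_le_pos; assumption|].
    apply (Rmult_le_reg_r mu); [exact Hmu|]. field_simplify; lra. }
  assert (H2 : Derive F t - Derive F s <= M * Rabs (t - s))
    by (eapply Rle_trans; [apply Rle_abs | exact Hlip]).
  assert (H3 : Derive F s * (1 + M / mu * Rabs (t - s)) <= Derive F s * exp (M / mu * Rabs (t - s)))
    by (apply Rmult_le_compat_l; [left; apply Hpos | exact Hexp]).
  lra.
Qed.

End C2.

Definition degree_one (F : R -> R) : Prop := forall x, F (x + 1) = F x + 1.

Lemma degree_one_Z F n x : degree_one F -> F (x + IZR n) = F x + IZR n.
Proof.
  intro HF. revert x. induction n as [|n IH|n IH] using Z.peano_ind; intro x.
  - rewrite !Rplus_0_r. reflexivity.
  - rewrite succ_IZR. replace (x + (IZR n + 1)) with (x + IZR n + 1) by ring.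
    rewrite HF, IH. ring.
  - rewrite <- Z.sub_1_r, minus_IZR. replace (x + (IZR n - 1)) with (x - 1 + IZR n) by ring.
    rewrite IH. assert (E := HF (x - 1)). replace (x - 1 + 1) with x in E by ring. lra.
Qed.

Lemma degree_one_fixed_points_around F x1 x : degree_one F -> F x1 = x1 ->
  (exists p, p <= x /\ F p = p) /\ (exists q, x <= q /\ F q = q).
Proof.
  intros HF Hx1. split.
  - exists (x1 + IZR (- up (x1 - x))). rewrite degree_one_Z, Hx1 by exact HF.
    rewrite opp_IZR. destruct (archimed (x1 - x)). split; [lra | reflexivity].
  - exists (x1 + IZR (up (x - x1))). rewrite degree_one_Z, Hx1 by exact HF.
    destruct (archimed (x - x1)). split; [lra | reflexivity].
Qed.

Lemma degree_one_surjective F : degree_one F -> continuity F -> forall y, exists x, F x = y.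
Proof.
  intros HF Hc y. set (n := up (Rabs y + Rabs (F 0))).
  destruct (archimed (Rabs y + Rabs (F 0))) as [Hn _]. fold n in Hn.
  assert (Hy := Rle_abs y). assert (Hy' := Rle_abs (- y)). rewrite Rabs_Ropp in Hy'.
  assert (H0 := Rle_abs (F 0)). assert (H0' := Rle_abs (- F 0)). rewrite Rabs_Ropp in H0'.
  assert (Hup := degree_one_Z F n 0 HF). assert (Hdown := degree_one_Z F (- n) 0 HF).
  rewrite Rplus_0_l in Hup, Hdown. rewrite opp_IZR in Hdown.
  destruct (IVT_cor (fun x => F x - y) (- IZR n) (IZR n)) as [z [_ Ez]].
  - intro x. apply continuity_pt_minus; [apply Hc | apply continuity_pt_const; intros ? ?; reflexivity].
  - lra.
  - cbv beta. rewrite Hup, Hdown.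
    assert (F 0 + - IZR n - y <= 0) by lra. assert (0 <= F 0 + IZR n - y) by lra. nra.
  - exists z. cbv beta in Ez. lra.
Qed.

Lemma degree_one_displacement F x1 y : degree_one F -> strict_increasing F -> F x1 = x1 ->
  -1 < F y - y < 1.
Proof.
  intros HF Hinc Hx1. set (n := up (y - x1)). destruct (archimed (y - x1)) as [H1 H2]. fold n in H1, H2.
  assert (Hq : F (x1 + IZR n) = x1 + IZR n) by (rewrite degree_one_Z, Hx1 by exact HF; reflexivity).
  assert (Hp : F (x1 + IZR (n - 1)) = x1 + IZR (n - 1))
    by (rewrite degree_one_Z, Hx1 by exact HF; reflexivity).
  rewrite minus_IZR in Hp.
  assert (Hlow : F (x1 + (IZR n - 1)) <= F y) by (apply (strict_increasing_increasing F Hinc); lra).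
  assert (Hhigh : F y < F (x1 + IZR n)) by (apply Hinc; lra).
  lra.
Qed.

Definition no_interval_of_fixed_points (G : R -> R) : Prop :=
  forall p q, p < q -> ~ (forall x, p < x < q -> G x = x).

(* If F moved a fixed point p of G, G would fix the whole F-orbit of p and its
   limit q, and Kopell's lemma on the gap between p and q would make G the
   identity there. *)
Lemma fixed_points_inherited F G : C2_pos_deriv F -> degree_one F -> (exists x1, F x1 = x1) ->
  C2_pos_deriv G -> no_interval_of_fixed_points G -> (forall x, F (G x) = G (F x)) ->
  forall p, G p = p -> F p = p.
Proof.
  intros HF HF1 [x1 Hx1] HG HGfree Hcomm p Hp. apply NNPP. intro Hne.
  destruct (degree_one_fixed_points_around F x1 p HF1 Hx1) as [[q1 [Hq1 Fq1]] [q2 [Hq2 Fq2]]].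
  assert (HGorbit : forall n, G (Nat.iter n F p) = Nat.iter n F p).
  { intro n. rewrite (Nat.iter_swap_gen _ _ G F F (fun x => eq_sym (Hcomm x))), Hp. reflexivity. }
  assert (HGFp : G (F p) = F p) by exact (HGorbit 1%nat).
  assert (HGcomm : forall x, G (F x) = F (G x)) by (intro x; symmetry; apply Hcomm).
  assert (HGinc := strict_increasing_increasing G (C2_strict_increasing G HG)).
  destruct (Rtotal_order p (F p)) as [Hlt|[E|Hgt]]; [| exact (Hne (eq_sym E)) |].
  - destruct (orbit_gap_up F p q2 (C2_continuity F HF) (C2_strict_increasing F HF) Hlt Hq2 Fq2)
      as [q [HFpq [Hq [Hup Hcv]]]].
    assert (HGq := fixed_point_of_fixed_sequence_limit G _ q (C2_continuity G HG q) Hcv HGorbit).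
    destruct (C2_log_lipschitz F HF p q ltac:(lra)) as [c [Hc Hlip]].
    apply (HGfree p q ltac:(lra)). intros x Hx.
    exact (kopell_right F (Derive F) G (Derive G) p q c (F p) Hc (C2_derivable F HF)
      (C2_strict_increasing F HF) Hlip Hq Hup (C2_derivable G HG) (C2_deriv_continuity G HG q)
      HGinc HGcomm HGq ltac:(lra) HGFp x Hx).
  - destruct (orbit_gap_down F p q1 (C2_continuity F HF) (C2_strict_increasing F HF) Hgt Hq1 Fq1)
      as [q [HFpq [Hq [Hdown Hcv]]]].
    assert (HGq := fixed_point_of_fixed_sequence_limit G _ q (C2_continuity G HG q) Hcv HGorbit).
    destruct (C2_log_lipschitz F HF q p ltac:(lra)) as [c [Hc Hlip]].
    apply (HGfree q p ltac:(lra)). intros x Hx.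
    exact (kopell F (Derive F) G (Derive G) q p c Hc (C2_derivable F HF)
      (C2_strict_increasing F HF) Hlip Hq Hdown (C2_derivable G HG) (C2_deriv_continuity G HG q)
      HGinc HGcomm HGq (F p) ltac:(lra) HGFp x Hx).
Qed.

Definition centralizer_C1_on (G : R -> R) (a b : R) (u : R -> R) : Prop :=
  (exists du, C1_diffeo u du) /\ (forall x, u (G x) = G (u x)) /\ u a = a /\ u b = b.

Section FixedPointFreeComponent.
Variables (G : R -> R) (a b : R).
Hypotheses (HG : C2_pos_deriv G) (Hab : a < b) (HGa : G a = a) (HGb : G b = b)
  (HGfree : forall s, a < s < b -> G s <> s).

Lemma centralizer_acts_freely u t0 : centralizer_C1_on G a b u -> a < t0 < b -> u t0 = t0 ->
  forall t, a < t < b -> u t = t.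
Proof.
  intros [[du [Hu [Hdu [Hpos _]]]] [Hcomm [Hua Hub]]] Ht0 Hut0.
  destruct (C2_log_lipschitz G HG a b (Rlt_le _ _ Hab)) as [c [Hc Hlip]].
  assert (Huinc := strict_increasing_increasing u (pos_deriv_strict_increasing u du Hu Hpos)).
  destruct (no_fixed_point_sign G a b (C2_continuity G HG) HGfree) as [Hdown|Hup].
  - exact (kopell G (Derive G) u du a b c Hc (C2_derivable G HG) (C2_strict_increasing G HG) Hlip
      HGa Hdown Hu (Hdu a) Huinc Hcomm Hua t0 Ht0 Hut0).
  - exact (kopell_right G (Derive G) u du a b c t0 Hc (C2_derivable G HG)
      (C2_strict_increasing G HG) Hlip HGb Hup Hu (Hdu b) Huinc Hcomm Hub Ht0 Hut0).
Qed.

Theorem centralizer_commute_on f h : centralizer_C1_on G a b f -> centralizer_C1_on G a b h ->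
  commute_on a b f h.
Proof.
  apply (holder (centralizer_C1_on G a b) a b Hab).
  - split; [exists (fun _ => 1); exact C1_diffeo_id | repeat split; reflexivity].
  - intros u v [[du Hu] [Cu [Hua Hub]]] [[dv Hv] [Cv [Hva Hvb]]]. repeat split.
    + eexists. exact (C1_diffeo_comp u du v dv Hu Hv).
    + intro x. rewrite Cv, Cu. reflexivity.
    + rewrite Hva, Hua. reflexivity.
    + rewrite Hvb, Hub. reflexivity.
  - intros u [[du Hu] [Cu [Hua Hub]]].
    destruct Hu as [Hder [Hdc [Hpos Hsurj]]].
    assert (Hl : forall x, inverse_fun u (u x) = x)
      by (intro x; apply inverse_fun_l, (pos_deriv_strict_increasing u du Hder Hpos)).
    repeat split.
    + eexists. apply (C1_diffeo_inverse u du). repeat split; assumption.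
    + intro x. rewrite <- (inverse_fun_r u x (Hsurj x)) at 1. rewrite <- Cu. apply Hl.
    + rewrite <- Hua at 1. apply Hl.
    + rewrite <- Hub at 1. apply Hl.
  - intros u [[du [Hder [_ [Hpos _]]]] _]. exact (pos_deriv_strict_increasing u du Hder Hpos).
  - intros u [[du [_ [_ [_ Hsurj]]]] _]. exact Hsurj.
  - intros u [[du [Hder _]] _] x. exact (derivable_pt_lim_continuity_pt _ _ _ (Hder x)).
  - intros u [_ [_ Hfix]]. exact Hfix.
  - exact centralizer_acts_freely.
Qed.

End FixedPointFreeComponent.

Lemma C2_degree_one_C1_diffeo F : C2_pos_deriv F -> degree_one F -> C1_diffeo F (Derive F).
Proof.
  intros HF HF1. repeat split.
  - exact (C2_derivable F HF).
  - exact (C2_deriv_continuity F HF).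
  - apply HF.
  - exact (degree_one_surjective F HF1 (C2_continuity F HF)).
Qed.

(* Off Fix(G), F and H preserve the component of R \ Fix(G) containing x,
   where Kopell's lemma makes the C^1 centralizer of G act freely. *)
Theorem commute_through_fully_supported F G H :
  C2_pos_deriv F -> degree_one F -> (exists x1, F x1 = x1) ->
  C2_pos_deriv G -> degree_one G -> (exists x1, G x1 = x1) -> no_interval_of_fixed_points G ->
  C2_pos_deriv H -> degree_one H -> (exists x1, H x1 = x1) ->
  (forall x, F (G x) = G (F x)) -> (forall x, H (G x) = G (H x)) ->
  forall x, F (H x) = H (F x).
Proof.
  intros HF HF1 HFfix HG HG1 [g1 Hg1] HGfree HH HH1 HHfix HFG HHG x.
  assert (IF := fixed_points_inherited F G HF HF1 HFfix HG HGfree HFG).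
  assert (IH := fixed_points_inherited H G HH HH1 HHfix HG HGfree HHG).
  destruct (Req_dec (G x) x) as [Hx|Hx].
  - rewrite (IH x Hx), (IF x Hx), (IH x Hx). reflexivity.
  - destruct (degree_one_fixed_points_around G g1 x HG1 Hg1) as [Hbelow Habove].
    destruct (fixed_point_free_component G x (C2_continuity G HG) Hbelow Habove Hx)
      as [a [b [Hx' [Ha [Hb Hfree]]]]].
    apply (centralizer_commute_on G a b HG ltac:(lra) Ha Hb Hfree); [| | lra];
      repeat split; auto; eexists; apply C2_degree_one_C1_diffeo; assumption.
Qed.

(** * Circle maps and the commutativity graph *)

Lemma frac_part_shift y n : frac_part (y + IZR n) = frac_part y.
Proof.
  symmetry. apply (Int_part_frac_part_spec (y + IZR n) (Int_part y + n) (frac_part y)).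
  - destruct (base_fp y). split; lra.
  - rewrite plus_IZR. pose proof (Rplus_Int_part_frac_part y). lra.
Qed.

Lemma proj_eq x y : frac_part x = frac_part y -> proj x = proj y.
Proof.
  intro E. unfold proj. generalize (frac_part_in01 x) (frac_part_in01 y). rewrite E.
  intros Hx Hy. f_equal. apply proof_irrelevance.
Qed.

Lemma proj_shift x n : proj (x + IZR n) = proj x.
Proof. apply proj_eq, frac_part_shift. Qed.

Lemma proj_val (p : S1) : proj (proj1_sig p) = p.
Proof.
  destruct p as [x Hx]. unfold proj. simpl. generalize (frac_part_in01 x).
  replace (frac_part x) with x.
  - intro. f_equal. apply proof_irrelevance.
  - apply (Int_part_frac_part_spec x 0 x Hx). simpl. ring.
Qed.

Lemma proj_eq_integer_shift x y : proj x = proj y -> exists n, x = y + IZR n.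
Proof.
  intro E. apply (f_equal (@proj1_sig _ _)) in E. simpl in E.
  exists (Int_part x - Int_part y)%Z. rewrite minus_IZR.
  pose proof (Rplus_Int_part_frac_part x). pose proof (Rplus_Int_part_frac_part y). lra.
Qed.

Lemma continuous_integer_valued_not_lt D x y : continuity D -> (forall z, exists n, D z = IZR n) ->
  ~ D x < D y.
Proof.
  intros Hc Hint Hxy. destruct (Hint x) as [n Hn].
  set (h := fun z => D z - (IZR n + / 2)).
  assert (Hh : continuity h)
    by (intro z; apply continuity_pt_minus; [apply Hc | apply continuity_pt_const; intros ? ?; reflexivity]).
  assert (Hy : IZR n + 1 <= D y).
  { destruct (Hint y) as [m Hm]. rewrite Hn, Hm in Hxy. rewrite Hm, <- succ_IZR.
    apply IZR_le. apply lt_IZR in Hxy. lia. }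
  assert (Hprod : h (Rmin x y) * h (Rmax x y) <= 0).
  { unfold h, Rmin, Rmax. destruct (Rle_dec x y); nra. }
  destruct (IVT_cor h (Rmin x y) (Rmax x y) Hh (Rmin_Rmax x y) Hprod) as [z [_ Hz]].
  destruct (Hint z) as [m Hm]. unfold h in Hz. rewrite Hm in Hz.
  assert (H1 : IZR n < IZR m) by lra. assert (H2 : IZR m < IZR (n + 1)) by (rewrite plus_IZR; lra).
  apply lt_IZR in H1, H2. lia.
Qed.

Lemma continuous_integer_valued_constant D x y : continuity D -> (forall z, exists n, D z = IZR n) ->
  D x = D y.
Proof.
  intros Hc Hint. destruct (Rtotal_order (D x) (D y)) as [H|[H|H]]; [|exact H|]; exfalso;
    exact (continuous_integer_valued_not_lt D _ _ Hc Hint H).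
Qed.

(* F o G and G o F are lifts of the same circle map, so they differ by a
   continuous integer-valued function, which vanishes at a fixed point of F. *)
Lemma lifts_commute f g F G : is_lift f F -> is_lift g G -> continuity F -> continuity G ->
  strict_increasing F -> degree_one F -> (exists x1, F x1 = x1) ->
  commute_maps f g -> forall x, F (G x) = G (F x).
Proof.
  intros LF LG HFc HGc HFinc HF1 [x1 Hx1] Hfg.
  set (D := fun x => F (G x) - G (F x)).
  assert (Hint : forall x, exists n, D x = IZR n).
  { intro x.
    assert (E : proj (F (G x)) = proj (G (F x))) by (rewrite LF, LG, Hfg, <- LF, LG; reflexivity).
    destruct (proj_eq_integer_shift _ _ E) as [n Hn]. exists n. unfold D. lra. }
  assert (Hc : continuity D).
  { intro x. apply continuity_pt_minus; apply continuity_pt_comp; auto. }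
  assert (HD1 : D x1 = 0).
  { destruct (Hint x1) as [n Hn]. unfold D in *. rewrite Hx1 in *.
    assert (Hd := degree_one_displacement F x1 (G x1) HF1 HFinc Hx1).
    assert (Hn0 : n = 0%Z) by (rewrite Hn in Hd; destruct Hd as [H1 H2]; apply lt_IZR in H1, H2; lia).
    rewrite Hn, Hn0. reflexivity. }
  intro x. assert (E := continuous_integer_valued_constant D x x1 Hc Hint).
  rewrite HD1 in E. unfold D in E. lra.
Qed.

Lemma Diff2plus_lift_with_fixed_point f : Diff2plus f -> has_fixed_point f ->
  exists F, is_lift f F /\ C2_pos_deriv F /\ degree_one F /\ exists x1, F x1 = x1.
Proof.
  intros [F [HL [Hdeg [Hd [Hd2 [Hc Hpos]]]]]] [p Hp].
  set (x0 := proj1_sig p).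
  assert (E : proj (F x0) = proj x0) by (rewrite HL; unfold x0; rewrite proj_val; exact Hp).
  destruct (proj_eq_integer_shift _ _ E) as [m Hm].
  set (F' := fun x => F x - IZR m).
  assert (DF : Derive F' = Derive F).
  { apply functional_extensionality. intro x. unfold F'.
    rewrite Derive_minus; [|apply Hd | apply ex_derive_const]. rewrite Derive_const. ring. }
  exists F'. repeat split.
  - intro x. rewrite <- HL. unfold F'.
    replace (F x - IZR m) with (F x + IZR (- m)) by (rewrite opp_IZR; ring). apply proj_shift.
  - intro x. apply (ex_derive_minus F (fun _ => IZR m)); [apply Hd | apply ex_derive_const].
  - intro x. rewrite DF. apply Hd2.
  - intro x. rewrite DF. apply Hc.
  - intro x. rewrite DF. apply Hpos.
  - intro x. unfold F'. rewrite Hdeg. ring.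
  - exists x0. unfold F'. lra.
Qed.

Lemma lift_no_interval_of_fixed_points f F : is_lift f F -> fully_supported f ->
  no_interval_of_fixed_points F.
Proof.
  intros LF Hf p q Hpq HF. apply Hf. exists p, q. split; [exact Hpq|].
  intros x Hx. rewrite <- LF, HF by exact Hx. reflexivity.
Qed.

Lemma commute_maps_of_lifts f h F H : is_lift f F -> is_lift h H ->
  (forall x, F (H x) = H (F x)) -> commute_maps f h.
Proof.
  intros LF LH E p. rewrite <- (proj_val p), <- LH, <- LF, <- LF, <- LH, E. reflexivity.
Qed.

Lemma commute_maps_through_fully_supported f g h :
  Diff2plus f -> Diff2plus g -> Diff2plus h ->
  has_fixed_point f -> has_fixed_point g -> has_fixed_point h -> fully_supported g ->
  commute_maps f g -> commute_maps g h -> commute_maps f h.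
Proof.
  intros Df Dg Dh Ff Fg Fh Sg Hfg Hgh.
  destruct (Diff2plus_lift_with_fixed_point f Df Ff) as [F [LF [HF [HF1 HFfix]]]].
  destruct (Diff2plus_lift_with_fixed_point g Dg Fg) as [G [LG [HG [HG1 HGfix]]]].
  destruct (Diff2plus_lift_with_fixed_point h Dh Fh) as [H [LH [HH [HH1 HHfix]]]].
  apply (commute_maps_of_lifts f h F H LF LH).
  apply (commute_through_fully_supported F G H HF HF1 HFfix HG HG1 HGfix
           (lift_no_interval_of_fixed_points g G LG Sg) HH HH1 HHfix).
  - exact (lifts_commute f g F G LF LG (C2_continuity F HF) (C2_continuity G HG)
             (C2_strict_increasing F HF) HF1 HFfix Hfg).
  - intro x. symmetry.
    exact (lifts_commute g h G H LG LH (C2_continuity G HG) (C2_continuity H HH)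
             (C2_strict_increasing G HG) HG1 HGfix Hgh x).
Qed.

Lemma connected_generators_commute k g :
  (forall i j l, (i < k)%nat -> (j < k)%nat -> (l < k)%nat ->
     commute_maps (g i) (g j) -> commute_maps (g j) (g l) -> commute_maps (g i) (g l)) ->
  comm_graph_connected k g -> forall i j, (i < k)%nat -> (j < k)%nat -> commute_maps (g i) (g j).
Proof.
  intros Htrans Hconn i j Hi Hj.
  assert (Hpath : forall x y, clos_refl_trans nat (comm_edge k g) x y -> (x < k)%nat ->
            (y < k)%nat /\ commute_maps (g x) (g y)).
  { intros x y Hxy. induction Hxy as [x y [_ [Hy Hc]] | x | x y z _ IH1 _ IH2]; intro Hx.
    - split; assumption.
    - split; [exact Hx | intro p; reflexivity].
    - destruct (IH1 Hx) as [Hy Hxy]. destruct (IH2 Hy) as [Hz Hyz].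
      split; [exact Hz | exact (Htrans x y z Hx Hy Hz Hxy Hyz)]. }
  exact (proj2 (Hpath i j (Hconn i j Hi Hj) Hi)).
Qed.

Lemma in_gen_group_commute k g x : (forall i, (i < k)%nat -> commute_maps (g i) x) ->
  forall h, in_gen_group k g h -> commute_maps h x.
Proof.
  intros Hgen h Hh. induction Hh as [| i Hi | h1 h2 _ IH1 _ IH2 | h h' _ IH Hl Hr]; intro p.
  - reflexivity.
  - apply Hgen, Hi.
  - rewrite IH2, IH1. reflexivity.
  - rewrite <- (Hl (x (h' p))), IH, Hr. reflexivity.
Qed.

Lemma gen_group_abelian_of_commuting_generators k g :
  (forall i j, (i < k)%nat -> (j < k)%nat -> commute_maps (g i) (g j)) -> gen_group_abelian k g.
Proof.
  intros Hgen h1 h2 H1 H2. apply (in_gen_group_commute k g h2); [|exact H1].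
  intros i Hi p. symmetry. revert p.
  apply (in_gen_group_commute k g (g i)); [|exact H2].
  intros j Hj. apply Hgen; assumption.
Qed.

Theorem corollary3p6 (k : nat) (g : nat -> S1 -> S1) :
  (forall i, (i < k)%nat -> Diff2plus (g i)) ->
  (forall i, (i < k)%nat -> fully_supported (g i)) ->
  (forall i, (i < k)%nat -> has_fixed_point (g i)) ->
  comm_graph_connected k g ->
  gen_group_abelian k g.
Proof.
  intros HD HS HF Hconn.
  apply gen_group_abelian_of_commuting_generators.
  apply (connected_generators_commute k g); [|exact Hconn].
  intros i j l Hi Hj Hl.
  apply commute_maps_through_fully_supported; auto.
Qed.
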